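(* Let $R_1,\ldots,R_n$ be left localization maximal rings and $R:=R_1\times\cdots\times R_n$. For $i=1,\ldots,n$ let $S_i:=R_1\times\cdots\times R_i^*\times\cdots\times R_n$, where $R_i^*$ is the group of units of $R_i$ (placed in the $i$-th coordinate). Then: (1) $\max\mathrm{Den}_l(R)=\{S_1,\ldots,S_n\}$; (2) $\mathrm{ass}(S_i)=R_1\times\cdots\times 0\times\cdots\times R_n$ ($0$ in the $i$-th place) for each $i$, and $\mathrm{ass}(S_i)+\mathrm{ass}(S_j)=R$ for all $i\neq j$; (3) $S_i^{-1}R\cong R_i\cong R/\mathrm{ass}(S_i)$, and the map $\sigma_i:R\to S_i^{-1}R$, $r\mapsto\frac{r}{1}$, is (under these identifications) the map $R\to R/\mathrm{ass}(S_i)$, $r\mapsto r+\mathrm{ass}(S_i)$; (4) $\mathfrak{l}_R=0$; (5) the ring homomorphism $\sigma:=\prod_{i=1}^n\sigma_i:R\to\prod_{i=1}^nS_i^{-1}R$, $r\mapsto(\frac{r}{1},\ldots,\frac{r}{1})$, is an isomorphism; (6) $\bigcap_{i=1}^nS_i=R^*=R_1^*\times\cdots\times R_n^*$, the group of units of $R$; (7) the set $\mathcal{L}_l(R)=\bigcup_{i=1}^nS_i$ of left localizable elements of $R$ consists precisely of the elements $(r_1,\ldots,r_n)\in R$ such that $r_i\in R_i^*$ for some $i$; (8) the set of left non-localizable elements of $R$ equals $\prod_{i=1}^n(R_i\setminus R_i^* )$, and for each $i$ the set of left non-localizable elements of $R_i$ is $R_i\setminus R_i^*$.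
   Context: All rings are associative with $1$. A multiplicative subset $S$ of $R$ ($1\in S$, $0\notin S$, closed under multiplication) is a left Ore set if $Sr\cap Rs\neq\emptyset$ for all $r\in R$, $s\in S$; for it, $\mathrm{ass}(S):=\{r\in R: sr=0\text{ for some } s\in S\}$. A left Ore set $S$ is a left denominator set if $rs=0$ ($r\in R$, $s\in S$) implies $tr=0$ for some $t\in S$. $\mathrm{Den}_l(R)$ is the set of left denominator sets, $S^{-1}R$ the left localization, $\max\mathrm{Den}_l(R)$ the set of maximal elements of $(\mathrm{Den}_l(R),\subseteq)$, and $\mathfrak{l}_R:=\bigcap_{S\in\max\mathrm{Den}_l(R)}\mathrm{ass}(S)$. An element $r\in R$ is left localizable if $r\in S$ for some $S\in\mathrm{Den}_l(R)$, and left non-localizable otherwise; $\mathcal{L}_l(R)$ is the set of left localizable elements. For a ring $A$, $S_0(A)$ is the largest left Ore set of $A$ consisting of regular elements and $Q_l(A):=S_0(A)^{-1}A$. A ring $A$ is a left localization maximal ring if $A=Q_l(A)$ (i.e. $S_0(A)$ consists of units) and $\{\mathrm{ass}(S):S\in\mathrm{Den}_l(A)\}=\{0\}$. *)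

From HB Require Import structures.
From mathcomp Require Import all_boot all_order all_algebra.
From mathcomp Require Import classical_sets.

Set Implicit Arguments.
Unset Strict Implicit.
Unset Printing Implicit Defensive.

Import GRing.Theory.
Local Open Scope ring_scope.
Local Open Scope classical_set_scope.

Section DProd.
Variables (I : finType) (R : I -> pzRingType).

Definition dprod := {dffun forall i : I, R i}.

HB.instance Definition _ := Choice.on dprod.

Definition dp_zero : dprod := [ffun i => 0].
Definition dp_opp (x : dprod) : dprod := [ffun i => - x i].
Definition dp_add (x y : dprod) : dprod := [ffun i => x i + y i].
Definition dp_one : dprod := [ffun i => 1].
Definition dp_mul (x y : dprod) : dprod := [ffun i => x i * y i].

Fact dp_addA : associative dp_add.
Proof. by move=> x y z; apply/ffunP=> i; rewrite !ffunE addrA. Qed.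
Fact dp_addC : commutative dp_add.
Proof. by move=> x y; apply/ffunP=> i; rewrite !ffunE addrC. Qed.
Fact dp_add0 : left_id dp_zero dp_add.
Proof. by move=> x; apply/ffunP=> i; rewrite !ffunE add0r. Qed.
Fact dp_addN : left_inverse dp_zero dp_opp dp_add.
Proof. by move=> x; apply/ffunP=> i; rewrite !ffunE addNr. Qed.

HB.instance Definition _ :=
  GRing.isZmodule.Build dprod dp_addA dp_addC dp_add0 dp_addN.

Fact dp_mulA : associative dp_mul.
Proof. by move=> x y z; apply/ffunP=> i; rewrite !ffunE mulrA. Qed.
Fact dp_mul1 : left_id dp_one dp_mul.
Proof. by move=> x; apply/ffunP=> i; rewrite !ffunE mul1r. Qed.
Fact dp_mulr1 : right_id dp_one dp_mul.
Proof. by move=> x; apply/ffunP=> i; rewrite !ffunE mulr1. Qed.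
Fact dp_mulDl : left_distributive dp_mul +%R.
Proof. by move=> x y z; apply/ffunP=> i; rewrite !ffunE mulrDl. Qed.
Fact dp_mulDr : right_distributive dp_mul +%R.
Proof. by move=> x y z; apply/ffunP=> i; rewrite !ffunE mulrDr. Qed.

HB.instance Definition _ :=
  GRing.Zmodule_isPzRing.Build dprod dp_mulA dp_mul1 dp_mulr1 dp_mulDl dp_mulDr.

Lemma dprod0E (i : I) : (0 : dprod) i = 0. Proof. by rewrite ffunE. Qed.
Lemma dprod1E (i : I) : (1 : dprod) i = 1. Proof. by rewrite ffunE. Qed.
Lemma dprodDE (x y : dprod) (i : I) : (x + y) i = x i + y i.
Proof. by rewrite ffunE. Qed.
Lemma dprodME (x y : dprod) (i : I) : (x * y) i = x i * y i.
Proof. by rewrite ffunE. Qed.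

End DProd.

Section LocNotions.
Variable R : pzRingType.

Definition units_of : set R := [set x | exists y : R, x * y = 1 /\ y * x = 1].

Definition mult_subset (S : set R) : Prop :=
  [/\ S 1, ~ S 0 & forall a b, S a -> S b -> S (a * b)].

Definition left_Ore (S : set R) : Prop :=
  mult_subset S /\
  forall (r s : R), S s -> exists (s' r' : R), S s' /\ s' * r = r' * s.

Definition ass (S : set R) : set R := [set r | exists s, S s /\ s * r = 0].

Definition left_den (S : set R) : Prop :=
  left_Ore S /\
  forall (r s : R), S s -> r * s = 0 -> exists t, S t /\ t * r = 0.

Definition Den_l : set (set R) := [set S | left_den S].

Definition maxDen_l : set (set R) :=
  [set S | left_den S /\ forall T, left_den T -> S `<=` T -> T = S].

Definition lrad : set R := [set r | forall S, maxDen_l S -> ass S r].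

Definition left_localizable (r : R) : Prop := exists S, left_den S /\ S r.
Definition L_l : set R := [set r | left_localizable r].

Definition regular : set R :=
  [set r | (forall x, r * x = 0 -> x = 0) /\ (forall x, x * r = 0 -> x = 0)].

Definition is_S0 (S : set R) : Prop :=
  [/\ left_Ore S, S `<=` regular &
      forall T, left_Ore T -> T `<=` regular -> T `<=` S].

(* left localization maximal ring:
   R = Q_l(R) (i.e. S_0(R) consists of units) and
   {ass(S) : S in Den_l(R)} = {0}. *)
Definition left_loc_maximal : Prop :=
  (exists S0, is_S0 S0 /\ S0 `<=` units_of) /\
  [set ass S | S in Den_l] = [set [set 0]].

End LocNotions.

(* A left localization (left ring of fractions) of R at S (Lam, Lectures
   on Modules and Rings, Def. 10.1, left version): a ring homomorphism
   sigma : R -> Q such that (i) sigma(S) consists of units of Q,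
   (ii) every element of Q has the form sigma(s)^-1 sigma(r), and
   (iii) ker sigma = ass(S). *)
Definition is_left_loc (R Q : pzRingType) (S : set R)
    (sigma : {rmorphism R -> Q}) : Prop :=
  [/\ forall s, S s -> units_of (sigma s),
      forall q : Q, exists s r, S s /\ sigma s * q = sigma r &
      forall r, sigma r = 0 <-> ass S r].

Arguments units_of R : clear implicits.
Arguments Den_l R : clear implicits.
Arguments maxDen_l R : clear implicits.
Arguments lrad R : clear implicits.
Arguments L_l R : clear implicits.
Arguments regular R : clear implicits.
Arguments left_loc_maximal R : clear implicits.

From HB Require Import structures.
From mathcomp Require Import all_boot all_order all_algebra.
From mathcomp Require Import boolp classical_sets.

(* In a left localization maximal ring every left denominator set has zero
   torsion, hence consists of regular elements, hence of units.  A left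
   denominator set T of R_1 x ... x R_n cannot contain, for every i, an element
   whose i-th coordinate vanishes (their product would be 0), so the i-th
   coordinate never vanishes on T for some i.  The image of T in R_i is then a
   left denominator set, so it consists of units, i.e. T lies in S_i.  Each S_i
   is itself a left denominator set with torsion ker(R -> R_i), and this
   projection is a left localization at S_i; everything else follows. *)

Set Implicit Arguments.
Unset Strict Implicit.
Unset Printing Implicit Defensive.

Import GRing.Theory.
Local Open Scope ring_scope.
Local Open Scope classical_set_scope.

Section Units.
Variable A : pzRingType.

Lemma units1 : units_of A 1.
Proof. by exists 1; rewrite mulr1. Qed.

Lemma unitsM (a b : A) : units_of A a -> units_of A b -> units_of A (a * b).
Proof.
move=> [a' [aa' a'a]] [b' [bb' b'b]]; exists (b' * a'); split.
  by rewrite mulrA -(mulrA a) bb' mulr1 aa'.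
by rewrite mulrA -(mulrA b') a'a mulr1 b'b.
Qed.

Lemma left_den_regular (S : set A) :
  left_den S -> ass S = [set 0] -> S `<=` regular A.
Proof.
move=> [_ Sden] assS s Ss; split=> x sx0; change ([set 0] x); rewrite -assS.
  by exists s.
exact: Sden sx0.
Qed.

Lemma left_loc_maximal_ass (S : set A) :
  left_loc_maximal A -> left_den S -> ass S = [set 0].
Proof.
move=> [_ assE] denS.
have : [set ass S | S in Den_l A] (ass S) by exists S.
by rewrite assE.
Qed.

Lemma left_loc_maximal_den_units (S : set A) :
  left_loc_maximal A -> left_den S -> S `<=` units_of A.
Proof.
move=> maxA denS; have [[S0 [[_ _ S0max] S0units]] _] := maxA.
apply: subset_trans S0units; apply: S0max; first by case: denS.
exact: left_den_regular denS (left_loc_maximal_ass maxA denS).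
Qed.

End Units.

Section NzUnits.
Variable A : nzRingType.

Lemma units_neq0 : ~ units_of A 0.
Proof. by case=> y [/esym/eqP]; rewrite mul0r oner_eq0. Qed.

Lemma units_left_den : left_den (units_of A).
Proof.
split; [split; [split|]|].
- exact: units1.
- exact: units_neq0.
- exact: unitsM.
- move=> r s [s' [ss' s's]]; exists 1, (r * s'); split; first exact: units1.
  by rewrite mul1r -mulrA s's mulr1.
- move=> r s [s' [ss' _]] rs0; exists 1; split; first exact: units1.
  by rewrite mul1r -(mulr1 r) -ss' mulrA rs0 mul0r.
Qed.

Lemma L_l_left_loc_maximal : left_loc_maximal A -> L_l A = units_of A.
Proof.
move=> maxA; apply/seteqP; split=> [x [S [denS Sx]]|x ux].
  exact: left_loc_maximal_den_units maxA denS x Sx.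
by exists (units_of A); split; [exact: units_left_den|].
Qed.

End NzUnits.

Section DirectProduct.
Variables (I : finType) (R : I -> nzRingType).
Local Notation RR := (dprod R).

Definition dproj (i : I) (x : RR) : R i := x i.

Fact dproj_is_nmod_morphism i : nmod_morphism (dproj i).
Proof. by split=> [|x y]; rewrite /dproj ffunE. Qed.
Fact dproj_is_monoid_morphism i : monoid_morphism (dproj i).
Proof. by split=> [|x y]; rewrite /dproj ffunE. Qed.
HB.instance Definition _ i :=
  GRing.isNmodMorphism.Build _ _ (dproj i) (dproj_is_nmod_morphism i).
HB.instance Definition _ i :=
  GRing.isMonoidMorphism.Build _ _ (dproj i) (dproj_is_monoid_morphism i).

Lemma dprodBE (x y : RR) i : (x - y) i = x i - y i.
Proof. by rewrite !ffunE. Qed.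

Definition dinj (i : I) (y : R i) : RR :=
  [ffun j => if (i =P j) is ReflectT e then ecast k (R k) e y else 0].
Arguments dinj : clear implicits.

Lemma dinj_id i (y : R i) : dinj i y i = y.
Proof. by rewrite /dinj ffunE; case: eqP => // e; rewrite (eq_irrelevance e erefl). Qed.

Lemma dinj_neq i j (y : R i) : i != j -> dinj i y j = 0.
Proof. by move=> ij; rewrite /dinj ffunE; case: eqP => // e; rewrite e eqxx in ij. Qed.

Lemma dinj_mull i (a : R i) (x : RR) : dinj i a * x = dinj i (a * x i).
Proof.
apply/ffunP=> j; rewrite dprodME; have [<-|ij] := eqVneq i j.
  by rewrite !dinj_id.
by rewrite !dinj_neq // mul0r.
Qed.

Lemma dinj_mulr i (a : R i) (x : RR) : x * dinj i a = dinj i (x i * a).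
Proof.
apply/ffunP=> j; rewrite dprodME; have [<-|ij] := eqVneq i j.
  by rewrite !dinj_id.
by rewrite !dinj_neq // mulr0.
Qed.

Lemma dinj0 i : dinj i 0 = 0.
Proof.
by apply/ffunP=> j; rewrite dprod0E; have [<-|ij] := eqVneq i j;
  rewrite ?dinj_id ?dinj_neq.
Qed.

Lemma units_dprod : units_of RR = [set x : RR | forall i, units_of (R i) (x i)].
Proof.
apply/seteqP; split=> [x [y [xy yx]] i|x ux].
  by exists (y i); rewrite -!dprodME xy yx dprod1E.
pose y : RR := [ffun i => proj1_sig (cid (ux i))].
have yE i : x i * y i = 1 /\ y i * x i = 1 by rewrite /y ffunE; case: cid.
by exists y; split; apply/ffunP=> i; rewrite dprodME dprod1E; case: (yE i).
Qed.

Definition units_at (i : I) : set RR := [set x | units_of (R i) (x i)].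

Lemma bigcap_units_at : \bigcap_i units_at i = units_of RR.
Proof. by rewrite units_dprod; apply/seteqP; split=> [x xu i|x xu i _]; apply: xu. Qed.

Lemma ass_units_at i : ass (units_at i) = [set x | x i = 0].
Proof.
apply/seteqP; split=> [x [s [[s' [_ s's]] sx0]]|x xi0] /=.
  by rewrite -[x i]mul1r -s's -mulrA -dprodME sx0 dprod0E mulr0.
exists (dinj i 1); split; first by rewrite /units_at /= dinj_id; exact: units1.
by rewrite dinj_mull mul1r xi0 dinj0.
Qed.

Lemma ass_units_at_comaximal i j : i != j ->
  forall r : RR, exists a b, ass (units_at i) a /\ ass (units_at j) b /\ r = a + b.
Proof.
move=> ij r; exists (r - r * dinj i 1), (r * dinj i 1).
have ji : j != i by rewrite eq_sym.
by rewrite !ass_units_at /= dprodBE !dinj_mulr dinj_id mulr1 subrr dinj_neq // subrK.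
Qed.

Lemma units_at_left_den i : left_den (units_at i).
Proof.
have e1 : units_at i (dinj i 1) by rewrite /units_at /= dinj_id; exact: units1.
split; [split; [split|]|].
- by rewrite /units_at /= dprod1E; exact: units1.
- by rewrite /units_at /= dprod0E; exact: units_neq0.
- by move=> a b; rewrite /units_at /= dprodME; exact: unitsM.
- move=> r s [s' [_ s's]]; exists (dinj i 1), (dinj i (r i * s')); split => //.
  by rewrite !dinj_mull mul1r -mulrA s's mulr1.
- move=> r s [s' [ss' _]] rs0; exists (dinj i 1); split => //.
  have ri0 : r i = 0 by rewrite -(mulr1 (r i)) -ss' mulrA -dprodME rs0 dprod0E mul0r.
  by rewrite dinj_mull mul1r ri0 dinj0.
Qed.

Lemma units_at_inj i j : units_at i `<=` units_at j -> i = j.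
Proof.
move=> sub; apply/eqP; apply: contraT => ij.
have : units_at i (dinj i 1) by rewrite /units_at /= dinj_id; exact: units1.
by move/sub; rewrite /units_at /= dinj_neq // => /units_neq0.
Qed.

(* Otherwise the product of elements of T vanishing at each coordinate in turn is 0. *)
Lemma mult_subset_coord_neq0 (T : set RR) :
  mult_subset T -> exists i, forall t, T t -> t i <> 0.
Proof.
move=> [T1 T0 TM]; apply: contrapT => /forallNP noi.
have {}noi i : exists t, T t /\ t i = 0.
  by have /existsNP[t /not_implyP[Tt /contrapT ti0]] := noi i; exists t.
have vanish (s : seq I) : exists t, T t /\ forall j, j \in s -> t j = 0.
  elim: s => [|a s [t [Tt ts0]]]; first by exists 1.
  have [u [Tu ua0]] := noi a; exists (u * t); split; first exact: TM.
  by move=> j; rewrite inE dprodME => /orP[/eqP->|/ts0->]; rewrite ?ua0 ?mul0r ?mulr0.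
have [t [Tt t0]] := vanish (enum I); apply: T0.
by have <- : t = 0 by apply/ffunP=> j; rewrite dprod0E t0 ?mem_enum.
Qed.

Lemma left_den_coord (T : set RR) i :
  left_den T -> (forall t, T t -> t i <> 0) -> left_den [set t i | t in T].
Proof.
move=> [[[T1 _ TM] TOre] Tden] Tnz; split; [split; [split|]|].
- by exists 1; rewrite ?dprod1E.
- by move=> [t Tt]; apply: Tnz.
- by move=> _ _ [a Ta <-] [b Tb <-]; exists (a * b); [exact: TM|rewrite dprodME].
- move=> r _ [t Tt <-]; have [s' [r' [Ts' e]]] := TOre (dinj i r) t Tt.
  exists (s' i), (r' i); split; first by exists s'.
  by have := congr1 (fun x : RR => x i) e; rewrite /= !dprodME dinj_id.
- move=> r _ [t Tt <-] rt0.
  have [u [Tu ur0]] : exists u, T u /\ u * dinj i r = 0.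
    by apply: Tden Tt _; rewrite dinj_mull rt0 dinj0.
  exists (u i); split; first by exists u.
  by have := congr1 (fun x : RR => x i) ur0; rewrite /= dprodME dprod0E dinj_id.
Qed.

Lemma dproj_left_loc i : is_left_loc (units_at i) (dproj i).
Proof.
split=> [s //|y|r]; last by rewrite ass_units_at.
exists 1, (dinj i y); split; first by rewrite /units_at /= dprod1E; exact: units1.
by rewrite rmorph1 mul1r; symmetry; exact: dinj_id.
Qed.

Hypothesis maxR : forall i, left_loc_maximal (R i).

Lemma left_den_sub_units_at (T : set RR) : left_den T -> exists i, T `<=` units_at i.
Proof.
move=> denT; have [i Tnz] := mult_subset_coord_neq0 denT.1.1.
exists i => t Tt; apply: left_loc_maximal_den_units (maxR i) (left_den_coord denT Tnz) _ _.
by exists t.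
Qed.

Lemma maxDen_l_dprod : maxDen_l RR = [set units_at i | i in [set: I]].
Proof.
apply/seteqP; split=> [T [denT Tmax]|_ [i _ <-]].
  have [i Ti] := left_den_sub_units_at denT.
  by exists i => //; apply: Tmax Ti; exact: units_at_left_den.
split=> [|T denT sub]; first exact: units_at_left_den.
have [j Tj] := left_den_sub_units_at denT.
have ij := units_at_inj (subset_trans sub Tj); subst j.
by apply/seteqP; split.
Qed.

Lemma lrad_dprod : lrad RR = [set 0].
Proof.
apply/seteqP; split=> [x assx|_ ->] /=.
  apply/ffunP=> i; rewrite dprod0E.
  have : ass (units_at i) x by apply: assx; rewrite maxDen_l_dprod; exists i.
  by rewrite ass_units_at.
move=> T [[[[T1 _ _] _] _] _]; exists 1; split=> //; exact: mulr0.
Qed.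

Lemma L_l_dprod : L_l RR = \bigcup_i units_at i.
Proof.
apply/seteqP; split=> [x [T [denT Tx]]|x [i _ xi]].
  by have [i Ti] := left_den_sub_units_at denT; exists i => //; exact: Ti.
by exists (units_at i); split; [exact: units_at_left_den|].
Qed.

Lemma setC_L_l_dprod : ~` L_l RR = [set x | forall i, ~ units_of (R i) (x i)].
Proof.
rewrite L_l_dprod; apply/seteqP; split=> [x nx i xi|x nx [i _ xi]].
  by apply: nx; exists i.
exact: nx xi.
Qed.

End DirectProduct.

Arguments dinj {I R} i y.

Section Localization.
Variables (I : finType) (R : I -> nzRingType) (i : I).
Variables (Q : pzRingType) (sigma : {rmorphism dprod R -> Q}).
Hypothesis locS : is_left_loc (units_at i) sigma.

Lemma loc_kerE r : sigma r = 0 <-> r i = 0.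
Proof. by case: locS => _ _ ->; rewrite ass_units_at. Qed.

Lemma loc_eqE r r' : sigma r = sigma r' <-> r i = r' i.
Proof.
split=> e; apply/subr0_eq.
  by rewrite -dprodBE -loc_kerE rmorphB e subrr.
by rewrite -rmorphB loc_kerE dprodBE e subrr.
Qed.

Lemma loc_surj q : exists r, sigma r = q.
Proof.
case: locS => _ /(_ q) [s [r [[v [_ vs]] sq]]] _.
have vsK : sigma (dinj i v) * sigma s = 1.
  by rewrite -rmorphM -(rmorph1 sigma) loc_eqE dinj_mull dinj_id vs dprod1E.
by exists (dinj i v * r); rewrite rmorphM -sq mulrA vsK mul1r.
Qed.

Definition loc_coord (q : Q) : R i := (proj1_sig (cid (loc_surj q))) i.

Lemma loc_coordP r q : sigma r = q <-> r i = loc_coord q.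
Proof. by rewrite /loc_coord; case: cid => r' /= <-; exact: loc_eqE. Qed.

Lemma loc_coordK r : loc_coord (sigma r) = r i.
Proof. by apply/esym/loc_coordP. Qed.

Fact loc_coord_is_nmod_morphism : nmod_morphism loc_coord.
Proof.
split=> [|x y]; first by rewrite -(rmorph0 sigma) loc_coordK dprod0E.
have [[r <-] [r' <-]] := (loc_surj x, loc_surj y).
by rewrite -rmorphD !loc_coordK dprodDE.
Qed.

Fact loc_coord_is_monoid_morphism : monoid_morphism loc_coord.
Proof.
split=> [|x y]; first by rewrite -(rmorph1 sigma) loc_coordK dprod1E.
have [[r <-] [r' <-]] := (loc_surj x, loc_surj y).
by rewrite -rmorphM !loc_coordK dprodME.
Qed.

HB.instance Definition _ :=
  GRing.isNmodMorphism.Build _ _ loc_coord loc_coord_is_nmod_morphism.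
HB.instance Definition _ :=
  GRing.isMonoidMorphism.Build _ _ loc_coord loc_coord_is_monoid_morphism.

Lemma loc_coord_bij : bijective loc_coord.
Proof.
exists (fun y => sigma (dinj i y)) => [q|y]; last by rewrite loc_coordK dinj_id.
by apply/loc_coordP; rewrite dinj_id.
Qed.

Lemma loc_iso :
  exists g : {rmorphism Q -> R i}, bijective g /\ forall r, g (sigma r) = r i.
Proof. by exists loc_coord; split; [exact: loc_coord_bij|exact: loc_coordK]. Qed.

End Localization.

Lemma dprod_loc_bij (I : finType) (R : I -> nzRingType) (Q : I -> pzRingType)
    (sigma : forall i, {rmorphism dprod R -> Q i}) :
  (forall i, is_left_loc (units_at i) (sigma i)) ->
  bijective (fun r : dprod R => [ffun i => sigma i r] : dprod Q).
Proof.
move=> locS; exists (fun q : dprod Q => [ffun i => loc_coord (locS i) (q i)] : dprod R).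
  by move=> r; apply/ffunP=> i; rewrite !ffunE loc_coordK.
by move=> q; apply/ffunP=> i; rewrite ffunE; apply/(loc_coordP (locS i)); rewrite ffunE.
Qed.

Theorem theorem2p9 (n : nat) (R : 'I_n -> nzRingType) :
  (0 < n)%N ->
  (forall i, left_loc_maximal (R i)) ->
  let RR := dprod R in
  let S := fun i : 'I_n => [set x : RR | units_of (R i) (x i)] in
  (* (1) *)
  maxDen_l RR = [set S i | i in [set: 'I_n]] /\
  (* (2) *)
  ((forall i, ass (S i) = [set x : RR | x i = 0]) /\
   (forall i j, i != j ->
      forall r : RR, exists a b, ass (S i) a /\ ass (S j) b /\ r = a + b)) /\
  (* (3) *)
  (forall i,
     (exists (Q : pzRingType) (sigma : {rmorphism RR -> Q}),
        is_left_loc (S i) sigma) /\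
     (forall (Q : pzRingType) (sigma : {rmorphism RR -> Q}),
        is_left_loc (S i) sigma ->
        exists g : {rmorphism Q -> R i},
          bijective g /\ forall r : RR, g (sigma r) = r i) /\
     ((forall y : R i, exists r : RR, r i = y) /\
      (forall r : RR, r i = 0 <-> ass (S i) r))) /\
  (* (4) *)
  lrad RR = [set 0] /\
  (* (5) *)
  (forall (Q : 'I_n -> pzRingType) (sigma : forall i, {rmorphism RR -> Q i}),
     (forall i, is_left_loc (S i) (sigma i)) ->
     bijective (fun r : RR => [ffun i => sigma i r] : dprod Q)) /\
  (* (6) *)
  (\bigcap_i S i = units_of RR /\
   units_of RR = [set x : RR | forall i, units_of (R i) (x i)]) /\
  (* (7) *)
  (L_l RR = \bigcup_i S i /\
   L_l RR = [set x : RR | exists i, units_of (R i) (x i)]) /\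
  (* (8) *)
  (~` L_l RR = [set x : RR | forall i, ~ units_of (R i) (x i)] /\
   forall i, ~` L_l (R i) = ~` units_of (R i)).
Proof.
move=> _ maxR RR S; have -> : S = @units_at _ R by [].
split; first exact: maxDen_l_dprod.
split; first by split; [exact: ass_units_at|exact: ass_units_at_comaximal].
split.
  move=> i; split; first by exists (R i), (dproj i); exact: dproj_left_loc.
  split; first by move=> Q sigma /loc_iso.
  split=> [y|r]; last by rewrite ass_units_at.
  by exists (dinj i y); rewrite dinj_id.
split; first exact: lrad_dprod.
split; first exact: dprod_loc_bij.
split; first by split; [exact: bigcap_units_at|exact: units_dprod].
split.
  split; first exact: L_l_dprod.
  by rewrite (L_l_dprod maxR); apply/seteqP; split=> [x [i _ xi]|x [i xi]]; exists i.
split=> [|i]; first exact: setC_L_l_dprod.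
by rewrite L_l_left_loc_maximal.
Qed.
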